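(* Under the hypotheses of Lemma 2 (stated in the context), let $\bm{U}\bm{\Sigma}\bm{V}^\top$ be the compact SVD of $\bm{X}\bm{Y}^\top$. There exists an invertible $\bm{Q}\in\mathbb{R}^{r\times r}$ with $\bm{X}=\bm{U}\bm{\Sigma}^{1/2}\bm{Q}$, $\bm{Y}=\bm{V}\bm{\Sigma}^{1/2}\bm{Q}^{-\top}$ and $\|\bm{\Sigma}_{\bm{Q}}-\bm{\Sigma}_{\bm{Q}}^{-1}\|_{\mathrm{F}}\le 8\sqrt{\kappa}\frac{p}{\lambda\sqrt{\sigma_{\min}}}\|\nabla f(\bm{X},\bm{Y})\|_{\mathrm{F}}\le 8c\sqrt{c_{\mathrm{inj}}p/\kappa}$, where $\bm{\Sigma}_{\bm{Q}}$ is the diagonal matrix of singular values of $\bm{Q}$ and $c$ is the constant in the gradient hypothesis.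
   Context: Setting: $\bm{M}^\star\in\mathbb{R}^{n\times n}$ rank $r$, nonzero singular values in $[\sigma_{\min},\sigma_{\max}]$, $\kappa=\sigma_{\max}/\sigma_{\min}$, $\bm{M}=\bm{M}^\star+\bm{E}$, $\Omega\subseteq[n]^2$, $p\in(0,1]$, $\lambda>0$, $\mathcal{P}_\Omega$ zeros entries outside $\Omega$. $f(\bm{X},\bm{Y})=\frac{1}{2p}\|\mathcal{P}_\Omega(\bm{X}\bm{Y}^\top-\bm{M})\|_{\mathrm{F}}^2+\frac{\lambda}{2p}(\|\bm{X}\|_{\mathrm{F}}^2+\|\bm{Y}\|_{\mathrm{F}}^2)$ with $\nabla_{\bm{X}}f=\frac1p[\mathcal{P}_\Omega(\bm{X}\bm{Y}^\top-\bm{M})\bm{Y}+\lambda\bm{X}]$, $\nabla_{\bm{Y}}f=\frac1p[\mathcal{P}_\Omega(\bm{X}\bm{Y}^\top-\bm{M})^\top\bm{X}+\lambda\bm{Y}]$. Hypotheses of Lemma 2: $\bm{X},\bm{Y}\in\mathbb{R}^{n\times r}$ have all singular values in $[\sqrt{\sigma_{\min}/2},\sqrt{2\sigma_{\max}}]$; $\|\mathcal{P}_\Omega(\bm{E})\|<\lambda/8$; $\|\mathcal{P}_\Omega(\bm{X}\bm{Y}^\top-\bm{M}^\star)-p(\bm{X}\bm{Y}^\top-\bm{M}^\star)\|<\lambda/8$; there is $c_{\mathrm{inj}}>0$ with $p^{-1}\|\mathcal{P}_\Omega(\bm{H})\|_{\mathrm{F}}^2\ge c_{\mathrm{inj}}\|\bm{H}\|_{\mathrm{F}}^2$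 for all $\bm{H}$ in the tangent space $\{\bm{U}\bm{A}^\top+\bm{B}\bm{V}^\top\}$ of $\bm{X}\bm{Y}^\top$; and $\|\nabla f(\bm{X},\bm{Y})\|_{\mathrm{F}}\le c\frac{\sqrt{c_{\mathrm{inj}}p}}{\kappa}\frac{\lambda}{p}\sqrt{\sigma_{\min}}$ for a sufficiently small absolute constant $c$. *)

From HB Require Import structures.
From mathcomp Require Import all_boot all_order all_algebra.
Set Implicit Arguments. Unset Strict Implicit. Unset Printing Implicit Defensive.
Import Order.TTheory GRing.Theory Num.Theory.
Local Open Scope ring_scope.

Section Defs.
Variable R : rcfType.

Definition frob {m k : nat} (A : 'M[R]_(m, k)) : R :=
  Num.sqrt (\sum_(i < m) \sum_(j < k) (A i j) ^+ 2).

Definition diag_nonneg {k : nat} (D : 'M[R]_k) : Prop :=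
  (forall i j : 'I_k, i != j -> D i j = 0) /\ (forall i : 'I_k, 0 <= D i i).

(* A *m D *m B^T is a (thin) singular value decomposition of X (m x k):
   A has orthonormal columns, B is orthogonal, D diagonal nonnegative;
   the singular values of X are the diagonal entries of D. *)
Definition is_svd {m k : nat} (X : 'M[R]_(m, k)) (A : 'M[R]_(m, k))
  (D : 'M[R]_k) (B : 'M[R]_k) : Prop :=
  A^T *m A = 1%:M /\ B^T *m B = 1%:M /\ diag_nonneg D /\ X = A *m D *m B^T.

Definition sv_in {m k : nat} (X : 'M[R]_(m, k)) (a b : R) : Prop :=
  exists A D B, is_svd X A D B /\ forall i, a <= D i i <= b.

Definition spec_lt {m k : nat} (X : 'M[R]_(m, k)) (t : R) : Prop :=
  exists A D B, is_svd X A D B /\ forall i, D i i < t.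

Definition is_compact_svd {m k : nat} (Z : 'M[R]_m) (U : 'M[R]_(m, k))
  (S : 'M[R]_k) (V : 'M[R]_(m, k)) : Prop :=
  U^T *m U = 1%:M /\ V^T *m V = 1%:M /\
  (forall i j : 'I_k, i != j -> S i j = 0) /\ (forall i : 'I_k, 0 < S i i) /\
  Z = U *m S *m V^T.

Definition diag_sqrt {k : nat} (S : 'M[R]_k) : 'M[R]_k :=
  \matrix_(i, j) (if i == j then Num.sqrt (S i i) else 0).

Definition POm {m : nat} (Om : {set 'I_m * 'I_m}) (A : 'M[R]_m) : 'M[R]_m :=
  \matrix_(i, j) (if (i, j) \in Om then A i j else 0).

Definition gradX {m k : nat} (Om : {set 'I_m * 'I_m}) (p lam : R)
  (M : 'M[R]_m) (X Y : 'M[R]_(m, k)) : 'M[R]_(m, k) :=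
  p^-1 *: (POm Om (X *m Y^T - M) *m Y + lam *: X).

Definition gradY {m k : nat} (Om : {set 'I_m * 'I_m}) (p lam : R)
  (M : 'M[R]_m) (X Y : 'M[R]_(m, k)) : 'M[R]_(m, k) :=
  p^-1 *: ((POm Om (X *m Y^T - M))^T *m X + lam *: Y).

Definition grad_norm {m k : nat} (Om : {set 'I_m * 'I_m}) (p lam : R)
  (M : 'M[R]_m) (X Y : 'M[R]_(m, k)) : R :=
  Num.sqrt (frob (gradX Om p lam M X Y) ^+ 2 + frob (gradY Om p lam M X Y) ^+ 2).

End Defs.

(* Write G1, G2 for the partial gradients of f at (X, Y).  The regularizer
   makes the Gram imbalance of (X, Y) visible in the gradient:
       lam (X^T X - Y^T Y) = p (X^T G1 - G2^T Y),
   hence ||X^T X - Y^T Y||_F^2 <= 4 smax (p/lam)^2 ||grad f||_F^2 by the upper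
   singular-value bound on X and Y.  On the other hand X, Y have full column
   rank, so X = U S^{1/2} Q and Y = V S^{1/2} Q^{-T} for an invertible Q, and
   conjugating by the right singular vectors of Q = A SQ B^T gives
       B^T X^T X B = SQ W SQ,  B^T Y^T Y B = SQ^{-1} W SQ^{-1},  W = A^T S A,
   whose diagonal entries are >= smin/2 by the lower singular-value bound.  An
   elementary scalar inequality turns this into
       smin^2 ||SQ - SQ^{-1}||_F^2 <= ||X^T X - Y^T Y||_F^2.
   The file first develops squared Frobenius norms, diagonal matrices and SVD
   bounds, then the factorization and the two estimates above; the theorem
   combines them, its second inequality being the gradient hypothesis rescaled. *)
From HB Require Import structures.
From mathcomp Require Import all_boot all_order all_algebra.
From mathcomp Require Import ring lra.
Import Order.TTheory GRing.Theory Num.Theory.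
Set Implicit Arguments. Unset Strict Implicit. Unset Printing Implicit Defensive.
Local Open Scope ring_scope.

Section Frobenius.
Variable R : rcfType.

(* The squared Frobenius norm, which avoids square roots in all estimates. *)
Definition frob2 {m k : nat} (M : 'M[R]_(m, k)) : R := \sum_i \sum_j M i j ^+ 2.

Lemma frob2_ge0 m k (M : 'M[R]_(m, k)) : 0 <= frob2 M.
Proof. by apply: sumr_ge0 => i _; apply: sumr_ge0 => j _; exact: sqr_ge0. Qed.

Lemma frob_sq m k (M : 'M[R]_(m, k)) : frob M ^+ 2 = frob2 M.
Proof. by rewrite /frob sqr_sqrtr // frob2_ge0. Qed.

Lemma frobE m k (M : 'M[R]_(m, k)) : frob M = Num.sqrt (frob2 M).
Proof. by []. Qed.

Lemma frob2_tr m k (M : 'M[R]_(m, k)) : frob2 M = \tr (M^T *m M).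
Proof.
rewrite /frob2 /mxtrace exchange_big; apply: eq_bigr => j _.
by rewrite mxE; apply: eq_bigr => i _; rewrite !mxE expr2.
Qed.

Lemma frob2_trmx m k (M : 'M[R]_(m, k)) : frob2 M^T = frob2 M.
Proof.
by rewrite /frob2 exchange_big; apply: eq_bigr => i _; apply: eq_bigr => j _; rewrite mxE.
Qed.

Lemma frob2Z m k (a : R) (M : 'M[R]_(m, k)) : frob2 (a *: M) = a ^+ 2 * frob2 M.
Proof.
rewrite /frob2 mulr_sumr; apply: eq_bigr => i _; rewrite mulr_sumr.
by apply: eq_bigr => j _; rewrite mxE exprMn.
Qed.

Lemma frob2B_le m k (M N : 'M[R]_(m, k)) : frob2 (M - N) <= 2 * frob2 M + 2 * frob2 N.
Proof.
rewrite /frob2 !mulr_sumr -big_split /=; apply: ler_sum => i _.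
rewrite !mulr_sumr -big_split /=; apply: ler_sum => j _.
by rewrite !mxE; have := sqr_ge0 (M i j + N i j); nra.
Qed.

Lemma diag_le_frob2 k (M : 'M[R]_k) : \sum_i M i i ^+ 2 <= frob2 M.
Proof.
apply: ler_sum => i _; rewrite (bigD1 i) //= lerDl.
by apply: sumr_ge0 => j _; exact: sqr_ge0.
Qed.

Lemma frob2_diag k (M : 'M[R]_k) :
  (forall i j, i != j -> M i j = 0) -> frob2 M = \sum_i M i i ^+ 2.
Proof.
move=> Moff; apply: eq_bigr => i _; rewrite (bigD1 i) //= big1 ?addr0 // => j ji.
by rewrite Moff ?expr0n // eq_sym.
Qed.

Lemma frob2_orth_conj k (B M : 'M[R]_k) :
  B^T *m B = 1%:M -> frob2 (B^T *m M *m B) = frob2 M.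
Proof.
move=> hB; have hB' : B *m B^T = 1%:M by apply: mulmx1C.
rewrite !frob2_tr !trmx_mul trmxK.
rewrite -!mulmxA (mulmxA B) hB' mul1mx mxtrace_mulC -!mulmxA hB' mulmx1.
by rewrite ?mulmxA.
Qed.

(* Bessel's inequality: projecting onto orthonormal columns A cannot increase
   the Frobenius norm, since ||G||^2 - ||A^T G||^2 = ||G - A A^T G||^2. *)
Lemma frob2_orth_proj m k l (A : 'M[R]_(m, k)) (G : 'M[R]_(m, l)) :
  A^T *m A = 1%:M -> frob2 (A^T *m G) <= frob2 G.
Proof.
move=> hA; set H := A^T *m G.
have eGH : (G - A *m H)^T *m (G - A *m H) = G^T *m G - H^T *m H.
  have e1 : G^T *m (A *m H) = H^T *m H by rewrite mulmxA /H trmx_mul trmxK.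
  have e2 : (A *m H)^T *m G = H^T *m H by rewrite trmx_mul -mulmxA.
  have e3 : (A *m H)^T *m (A *m H) = H^T *m H.
    by rewrite trmx_mul -mulmxA (mulmxA A^T) hA mul1mx.
  by rewrite [(G - _)^T]linearB /= mulmxBl !mulmxBr e1 e2 e3 opprB addrA subrK.
have := frob2_ge0 (G - A *m H).
by rewrite frob2_tr eGH linearB /= -!frob2_tr subr_ge0.
Qed.

End Frobenius.

Section DiagonalMatrices.
Variable R : rcfType.

Lemma diag_of k (D : 'M[R]_k) :
  (forall i j, i != j -> D i j = 0) -> D = diag_mx (\row_i D i i).
Proof.
move=> Doff; apply/matrixP => i j; rewrite !mxE.
by case: eqVneq => [->|/Doff ->]; rewrite ?mxE ?mulr1n ?mulr0n.
Qed.

(* Entries of a difference of matrices (mxE alone also unfolds the operands). *)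
Lemma mxBE m k (A B : 'M[R]_(m, k)) i j : (A - B) i j = A i j - B i j.
Proof. by rewrite !mxE. Qed.

Lemma diag_sandwich k (e : 'rV[R]_k) (W : 'M[R]_k) i :
  (diag_mx e *m W *m diag_mx e) i i = e 0 i * W i i * e 0 i.
Proof. by rewrite mul_mx_diag mul_diag_mx !mxE. Qed.

Lemma quad_diag m k (H : 'M[R]_(m, k)) (e : 'rV[R]_m) i :
  (H^T *m diag_mx e *m H) i i = \sum_l e 0 l * H l i ^+ 2.
Proof. by rewrite mul_mx_diag mxE; apply: eq_bigr => l _; rewrite !mxE; ring. Qed.

Lemma gram_diag m k (H : 'M[R]_(m, k)) i : (H^T *m H) i i = \sum_l H l i ^+ 2.
Proof. by rewrite mxE; apply: eq_bigr => l _; rewrite !mxE; ring. Qed.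

Lemma tr_quad m k (H : 'M[R]_(m, k)) (e : 'rV[R]_m) :
  \tr (H^T *m diag_mx e *m H) = \sum_l e 0 l * \sum_i H l i ^+ 2.
Proof.
rewrite /mxtrace (eq_bigr _ (fun i _ => quad_diag H e i)) exchange_big.
by apply: eq_bigr => l _; rewrite mulr_sumr.
Qed.

Lemma diag_sqr k (D : 'M[R]_k) :
  (forall i j, i != j -> D i j = 0) -> D *m D = diag_mx (\row_i (D i i * D i i)).
Proof.
move=> /diag_of Dd; rewrite {1 2}Dd mulmx_diag.
by congr diag_mx; apply/matrixP => i j; rewrite !mxE.
Qed.

End DiagonalMatrices.

Section SingularValues.
Variable R : rcfType.

Lemma diag_nonneg_sym k (D : 'M[R]_k) : diag_nonneg D -> D^T = D.
Proof. by case=> /diag_of -> _; rewrite tr_diag_mx. Qed.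

Lemma svd_upper m k l (X A : 'M[R]_(m, k)) (D B : 'M[R]_k) (G : 'M[R]_(m, l)) b :
  is_svd X A D B -> (forall i, D i i <= b) -> frob2 (X^T *m G) <= b ^+ 2 * frob2 G.
Proof.
case=> [hA [hB [hD ->]]] hb.
have DT := diag_nonneg_sym hD; case: hD => [Doff Dnn].
have -> : (A *m D *m B^T)^T *m G = B *m D *m (A^T *m G).
  by rewrite !trmx_mul trmxK DT !mulmxA.
have := frob2_orth_proj G hA; move: (A^T *m G) => H hH.
rewrite frob2_tr.
have -> : (B *m D *m H)^T *m (B *m D *m H) = H^T *m diag_mx (\row_i (D i i * D i i)) *m H.
  by rewrite !trmx_mul DT -!mulmxA (mulmxA B^T) hB mul1mx (mulmxA D D) diag_sqr.
rewrite tr_quad; apply: (@le_trans _ _ (b ^+ 2 * frob2 H)).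
  rewrite /frob2 mulr_sumr; apply: ler_sum => i _; rewrite mxE.
  apply: ler_wpM2r; first by apply: sumr_ge0 => j _; exact: sqr_ge0.
  by have := Dnn i; have := hb i; nra.
by apply: ler_wpM2l; [exact: sqr_ge0 | exact: hH].
Qed.

Lemma svd_lower m k l (X A : 'M[R]_(m, k)) (D B : 'M[R]_k) (Z : 'M[R]_(k, l)) a i :
  is_svd X A D B -> 0 <= a -> (forall i, a <= D i i) ->
  a ^+ 2 * (Z^T *m Z) i i <= (Z^T *m (X^T *m X) *m Z) i i.
Proof.
case=> [hA [hB [hD ->]]] ha hb.
have DT := diag_nonneg_sym hD; case: hD => [Doff Dnn].
have hB' : B *m B^T = 1%:M by apply: mulmx1C.
have -> : Z^T *m ((A *m D *m B^T)^T *m (A *m D *m B^T)) *m Z =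
          (B^T *m Z)^T *m diag_mx (\row_i (D i i * D i i)) *m (B^T *m Z).
  rewrite !trmx_mul !trmxK DT -!mulmxA (mulmxA A^T) hA mul1mx (mulmxA D D).
  by rewrite diag_sqr.
have -> : Z^T *m Z = (B^T *m Z)^T *m (B^T *m Z).
  by rewrite trmx_mul trmxK mulmxA -(mulmxA Z^T) hB' mulmx1.
rewrite quad_diag gram_diag mulr_sumr; apply: ler_sum => j _; rewrite mxE.
apply: ler_wpM2r; first exact: sqr_ge0.
by rewrite mxE; have := Dnn j; have := hb j; nra.
Qed.

Lemma svd_gram_unit m k (X A : 'M[R]_(m, k)) (D B : 'M[R]_k) :
  is_svd X A D B -> (forall i, 0 < D i i) -> X^T *m X \in unitmx.
Proof.
case=> [hA [hB [hD ->]]] Dpos.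
have DT := diag_nonneg_sym hD; case: hD => [Doff _].
set iD := diag_mx (\row_i (D i i * D i i)^-1).
have DDiD : D *m D *m iD = 1%:M.
  rewrite diag_sqr // mulmx_diag; apply/matrixP => i j; rewrite !mxE.
  case: eqVneq => [->|_] //=.
  by rewrite !mulr1n mulfV // mulf_neq0 // gt_eqF.
have : (A *m D *m B^T)^T *m (A *m D *m B^T) *m (B *m iD *m B^T) = 1%:M.
  rewrite !trmx_mul !trmxK DT -!mulmxA (mulmxA A^T) hA mul1mx (mulmxA B^T) hB mul1mx.
  by rewrite (mulmxA D D) (mulmxA (D *m D) iD) DDiD mul1mx mulmx1C.
by case/mulmx1_unit.
Qed.

Lemma svd_of_unit k (Q A SQ B : 'M[R]_k) :
  Q \in unitmx -> is_svd Q A SQ B ->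
  [/\ forall i, 0 < SQ i i,
      invmx SQ = diag_mx (\row_i (SQ i i)^-1) &
      invmx Q = B *m invmx SQ *m A^T].
Proof.
move=> Qu [hA [hB [[SQoff SQnn] hQe]]].
have hA' : A *m A^T = 1%:M by apply: mulmx1C.
have SQe : SQ = A^T *m Q *m B by rewrite hQe !mulmxA hA mul1mx -mulmxA hB mulmx1.
have SQu : SQ \in unitmx.
  have [Atu _] := mulmx1_unit hA; have [Bu _] := mulmx1_unit (mulmx1C hB).
  by rewrite SQe !unitmx_mul Atu Qu Bu.
have SQpos : forall i, 0 < SQ i i.
  move=> i; rewrite lt_def SQnn andbT; apply/negP => /eqP SQi0; move: SQu.
  by rewrite unitmxE (diag_of SQoff) det_diag unitfE (bigD1 i) //= mxE SQi0 mul0r eqxx.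
set iD := diag_mx _.
have SQiD : SQ *m iD = 1%:M.
  rewrite {1}(diag_of SQoff) mulmx_diag; apply/matrixP => i j; rewrite !mxE.
  by case: eqVneq => [->|_] /=; rewrite ?mulr1n ?mulr0n ?mulfV ?gt_eqF.
have iSQ : invmx SQ = iD by have := mulKmx SQu iD; rewrite SQiD mulmx1.
split=> //; rewrite iSQ.
have QiQ : Q *m (B *m iD *m A^T) = 1%:M.
  by rewrite hQe -!mulmxA (mulmxA B^T B) hB mul1mx (mulmxA SQ iD) SQiD mul1mx hA'.
by have := mulKmx Qu (B *m iD *m A^T); rewrite QiQ mulmx1.
Qed.

End SingularValues.

Section BalancedFactorization.
Variable R : rcfType.

Lemma diag_sqrt_props k (S : 'M[R]_k) :
  (forall i j, i != j -> S i j = 0) -> (forall i, 0 < S i i) ->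
  [/\ diag_sqrt S *m diag_sqrt S = S, (diag_sqrt S)^T = diag_sqrt S
    & diag_sqrt S \in unitmx].
Proof.
move=> Soff Spos.
have -> : diag_sqrt S = diag_mx (\row_i Num.sqrt (S i i)).
  by apply/matrixP => i j; rewrite !mxE; case: eqVneq => [->|_]; rewrite ?mulr1n ?mulr0n.
split; last 2 first.
- by rewrite tr_diag_mx.
- rewrite unitmxE det_diag unitfE; apply/prodf_neq0 => i _.
  by rewrite mxE gt_eqF // sqrtr_gt0.
rewrite mulmx_diag {3}(diag_of Soff); congr diag_mx; apply/matrixP => i j.
by rewrite !mxE -expr2 sqr_sqrtr // ltW.
Qed.

(* If X Y^T = U S V^T is a compact SVD and X, Y have full column rank, then
   X = U S^{1/2} Q and Y = V S^{1/2} Q^{-T}, with Q = S^{-1/2} U^T X invertible. *)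
Lemma balanced_factorization n k (X Y U V : 'M[R]_(n, k)) (S : 'M[R]_k) :
  is_compact_svd (X *m Y^T) U S V ->
  X^T *m X \in unitmx -> Y^T *m Y \in unitmx ->
  exists2 Q : 'M[R]_k, Q \in unitmx &
    X = U *m diag_sqrt S *m Q /\ Y = V *m diag_sqrt S *m (invmx Q)^T.
Proof.
move=> [hU [hV [Soff [Spos hXY]]]] XtXu YtYu.
have [s2s2 s2T s2u] := diag_sqrt_props Soff Spos; set s2 := diag_sqrt S in s2s2 s2T s2u *.
have ST : S^T = S by rewrite (diag_of Soff) tr_diag_mx.
have XinU : X = U *m (U^T *m X).
  have -> : X = X *m Y^T *m (Y *m invmx (Y^T *m Y)).
    by rewrite -mulmxA (mulmxA Y^T Y) mulmxV // mulmx1.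
  by rewrite hXY -!mulmxA (mulmxA U^T U) hU mul1mx.
have YinV : Y = V *m (V^T *m Y).
  have hYX : Y *m X^T = V *m S *m U^T.
    by rewrite -[Y *m X^T]trmxK trmx_mul trmxK hXY !trmx_mul trmxK ST mulmxA.
  have -> : Y = Y *m X^T *m (X *m invmx (X^T *m X)).
    by rewrite -mulmxA (mulmxA X^T X) mulmxV // mulmx1.
  by rewrite hYX -!mulmxA (mulmxA V^T V) hV mul1mx.
set Q := invmx s2 *m (U^T *m X).
have QQ' : Q *m (Y^T *m V *m invmx s2) = 1%:M.
  rewrite /Q -!mulmxA (mulmxA X) (mulmxA (X *m Y^T)) hXY -!mulmxA (mulmxA U^T U) hU mul1mx.
  rewrite (mulmxA V^T) hV mul1mx -s2s2 -!mulmxA (mulmxA (invmx s2)) mulVmx // mul1mx.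
  by rewrite mulmxV.
have [Qu _] := mulmx1_unit QQ'.
have iQ : invmx Q = Y^T *m V *m invmx s2.
  by have := mulKmx Qu (Y^T *m V *m invmx s2); rewrite QQ' mulmx1.
exists Q => //; split.
  by rewrite /Q -mulmxA (mulmxA s2) mulmxV // mul1mx -XinU.
rewrite iQ !trmx_mul trmxK trmx_inv s2T -mulmxA (mulmxA s2) mulmxV // mul1mx.
exact: YinV.
Qed.

Lemma factor_gram n k (X U : 'M[R]_(n, k)) (S P : 'M[R]_k) :
  U^T *m U = 1%:M -> (forall i j, i != j -> S i j = 0) -> (forall i, 0 < S i i) ->
  X = U *m diag_sqrt S *m P -> X^T *m X = P^T *m S *m P.
Proof.
move=> hU Soff Spos ->; have [s2s2 s2T _] := diag_sqrt_props Soff Spos.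
rewrite !trmx_mul s2T -!mulmxA (mulmxA U^T U) hU mul1mx (mulmxA (diag_sqrt S)) s2s2.
by rewrite !mulmxA.
Qed.

End BalancedFactorization.

Section Imbalance.
Variable R : rcfType.

(* Scalar core: if d > 0 and both d w d and d^{-1} w d^{-1} are >= s >= 0, then
   their difference w (d - d^{-1})(d + d^{-1}) is at least 2 s |d - d^{-1}|. *)
Lemma sandwich_gap (d w s : R) : 0 < d -> 0 <= s ->
  s <= d * w * d -> s <= d^-1 * w * d^-1 ->
  4 * s ^+ 2 * (d - d^-1) ^+ 2 <= (d * w * d - d^-1 * w * d^-1) ^+ 2.
Proof.
move=> d0 s0 sa sb; set e := d^-1 in sb *.
have de : d * e = 1 by rewrite /e mulfV // gt_eqF.
have e0 : 0 < e by rewrite /e invr_gt0.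
have w0 : 0 <= w.
  have -> : w = e * e * (d * w * d).
    transitivity ((d * e) * (d * e) * w); first by rewrite de !mul1r.
    by ring.
  by apply: mulr_ge0; [rewrite mulr_ge0 ?ltW | exact: le_trans s0 sa].
have sw : s <= w.
  have ss : s * s <= w ^+ 2.
    have -> : w ^+ 2 = (d * w * d) * (e * w * e).
      transitivity ((d * e) * (d * e) * w ^+ 2); first by rewrite de !mul1r.
      by ring.
    exact: ler_pM.
  by rewrite -(ler_pXn2r (_ : 0 < 2)%N) ?nnegrE // expr2.
have -> : d * w * d - e * w * e = w * (d - e) * (d + e) by ring.
have h4 : 4 <= (d + e) ^+ 2.
  have -> : (d + e) ^+ 2 = (d - e) ^+ 2 + 4 * (d * e) by ring.
  by rewrite de mulr1 lerDr sqr_ge0.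
have : s ^+ 2 * 4 <= w ^+ 2 * (d + e) ^+ 2.
  by apply: ler_pM => //; rewrite ?sqr_ge0 ?lerXn2r ?nnegrE.
by rewrite !exprMn; have := sqr_ge0 (d - e); nra.
Qed.

Lemma imbalance_lower n k (X Y : 'M[R]_(n, k)) (AX AY : 'M[R]_(n, k))
    (DX BX DY BY S Q A SQ B : 'M[R]_k) a :
  is_svd X AX DX BX -> is_svd Y AY DY BY -> 0 <= a ->
  (forall i, a <= DX i i) -> (forall i, a <= DY i i) ->
  X^T *m X = Q^T *m S *m Q -> Y^T *m Y = invmx Q *m S *m (invmx Q)^T ->
  Q \in unitmx -> is_svd Q A SQ B ->
  4 * (a ^+ 2) ^+ 2 * frob2 (SQ - invmx SQ) <= frob2 (X^T *m X - Y^T *m Y).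
Proof.
move=> svdX svdY a0 aX aY XtX YtY Qu svdQ.
have [SQpos iSQ iQ] := svd_of_unit Qu svdQ.
case: svdQ => [_ [hB [hSQ hQe]]]; have SQT := diag_nonneg_sym hSQ.
case: hSQ => [SQoff _].
have iSQT : (invmx SQ)^T = invmx SQ by rewrite iSQ tr_diag_mx.
set W := A^T *m S *m A.
have P1 : B^T *m (X^T *m X) *m B = SQ *m W *m SQ.
  rewrite XtX hQe !trmx_mul trmxK SQT -!mulmxA (mulmxA B^T B) hB mul1mx mulmx1 /W.
  by rewrite -?mulmxA.
have P2 : B^T *m (Y^T *m Y) *m B = invmx SQ *m W *m invmx SQ.
  rewrite YtY iQ !trmx_mul trmxK iSQT -!mulmxA (mulmxA B^T B) hB mul1mx mulmx1 /W.
  by rewrite -?mulmxA.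
have dP1 i : (SQ *m W *m SQ) i i = SQ i i * W i i * SQ i i.
  by rewrite {1 2}(diag_of SQoff) diag_sandwich !mxE.
have dP2 i : (invmx SQ *m W *m invmx SQ) i i = (SQ i i)^-1 * W i i * (SQ i i)^-1.
  by rewrite iSQ diag_sandwich !mxE.
have l1 i : a ^+ 2 <= SQ i i * W i i * SQ i i.
  by have := svd_lower B i svdX a0 aX; rewrite hB P1 (dP1 i) mxE eqxx mulr1n mulr1.
have l2 i : a ^+ 2 <= (SQ i i)^-1 * W i i * (SQ i i)^-1.
  by have := svd_lower B i svdY a0 aY; rewrite hB P2 (dP2 i) mxE eqxx mulr1n mulr1.
rewrite -(frob2_orth_conj (X^T *m X - Y^T *m Y) hB) mulmxBr mulmxBl P1 P2.
apply: le_trans (diag_le_frob2 _).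
rewrite frob2_diag; last by move=> i j ij; rewrite !mxE iSQ !mxE (negbTE ij) mulr0n subr0 SQoff.
rewrite mulr_sumr; apply: ler_sum => i _.
rewrite !mxBE (dP1 i) (dP2 i) iSQ mxE eqxx mulr1n mxE.
by apply: sandwich_gap; rewrite ?sqr_ge0.
Qed.

End Imbalance.

Section GradientBalance.
Variable R : rcfType.

Lemma grad_balance m k (Om : {set 'I_m * 'I_m}) (p lam : R) (M : 'M[R]_m)
    (X Y : 'M[R]_(m, k)) :
  p != 0 ->
  lam *: (X^T *m X - Y^T *m Y) =
  p *: (X^T *m gradX Om p lam M X Y - (gradY Om p lam M X Y)^T *m Y).
Proof.
move=> p0; rewrite /gradX /gradY; set P := POm Om (X *m Y^T - M).
rewrite [(_ *: _)^T]linearZ /= [(_ + _)^T]linearD /= [(lam *: Y)^T]linearZ /= trmx_mul trmxK.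
rewrite -scalemxAr -scalemxAl -scalerBr scalerA mulfV // scale1r.
rewrite mulmxDr mulmxDl -scalemxAr -scalemxAl mulmxA.
by rewrite opprD addrACA subrr add0r scalerBr.
Qed.

Lemma imbalance_upper m k (Om : {set 'I_m * 'I_m}) (p lam b : R) (M : 'M[R]_m)
    (X Y AX AY : 'M[R]_(m, k)) (DX BX DY BY : 'M[R]_k) :
  p != 0 -> lam != 0 ->
  is_svd X AX DX BX -> (forall i, DX i i <= b) ->
  is_svd Y AY DY BY -> (forall i, DY i i <= b) ->
  frob2 (X^T *m X - Y^T *m Y) <=
  (p / lam) ^+ 2 * (2 * b ^+ 2 *
    (frob2 (gradX Om p lam M X Y) + frob2 (gradY Om p lam M X Y))).
Proof.
move=> p0 lam0 svdX bX svdY bY.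
set G1 := gradX _ _ _ _ _ _; set G2 := gradY _ _ _ _ _ _.
have -> : X^T *m X - Y^T *m Y = (p / lam) *: (X^T *m G1 - G2^T *m Y).
  rewrite -[LHS]scale1r -(mulVf lam0) -(scalerA lam^-1 lam) (@grad_balance _ _ Om p lam M) //.
  by rewrite !scalerA mulrC.
rewrite frob2Z; apply: ler_wpM2l; first exact: sqr_ge0.
apply: le_trans (frob2B_le _ _) _.
have u1 : frob2 (X^T *m G1) <= b ^+ 2 * frob2 G1 := svd_upper G1 svdX bX.
have u2 : frob2 (G2^T *m Y) <= b ^+ 2 * frob2 G2.
  by rewrite -frob2_trmx trmx_mul trmxK; exact: svd_upper svdY bY.
have -> : 2 * b ^+ 2 * (frob2 G1 + frob2 G2) =
          2 * (b ^+ 2 * frob2 G1) + 2 * (b ^+ 2 * frob2 G2) by ring.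
by apply: lerD; apply: ler_wpM2l.
Qed.

Lemma grad_norm_sq m k (Om : {set 'I_m * 'I_m}) (p lam : R) (M : 'M[R]_m)
    (X Y : 'M[R]_(m, k)) :
  grad_norm Om p lam M X Y ^+ 2 =
  frob2 (gradX Om p lam M X Y) + frob2 (gradY Om p lam M X Y).
Proof. by rewrite /grad_norm sqr_sqrtr ?addr_ge0 ?sqr_ge0 // !frob_sq. Qed.

End GradientBalance.

Section ScalarBounds.
Variable R : rcfType.

(* Turns the combined imbalance bound smin^2 F <= 4 smax (p/lam)^2 g^2 into the
   claimed estimate on sqrt F (the constant 8 leaves a factor 4 of slack). *)
Lemma imbalance_to_norm (smin smax p lam g F : R) :
  0 < smin -> smin <= smax -> 0 < p -> 0 < lam -> 0 <= g ->
  4 * (smin / 2) ^+ 2 * F <= (p / lam) ^+ 2 * (2 * (2 * smax) * g ^+ 2) ->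
  Num.sqrt F <= 8 * Num.sqrt (smax / smin) * p / (lam * Num.sqrt smin) * g.
Proof.
move=> s0 ss p0 l0 g0 hF.
have ss0 : 0 < Num.sqrt smin by rewrite sqrtr_gt0.
have k0 : 0 <= smax / smin by rewrite divr_ge0 // ltW // (lt_le_trans s0).
set K := 8 * _ * _ / _.
have K0 : 0 <= K by rewrite /K divr_ge0 ?mulr_ge0 ?sqrtr_ge0 ?ltW.
rewrite -(ger0_norm (mulr_ge0 K0 g0)) -sqrtr_sqr ler_wsqrtr //.
have eK : smin ^+ 2 * (K * g) ^+ 2 = 16 * ((p / lam) ^+ 2 * (4 * smax * g ^+ 2)).
  have field_id (sk sm : R) : sm != 0 ->
      (sm ^+ 2) ^+ 2 * (8 * sk * p / (lam * sm) * g) ^+ 2 =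
      16 * ((p / lam) ^+ 2 * (4 * (sk ^+ 2 * sm ^+ 2) * g ^+ 2)).
    by move=> sm0; field; rewrite sm0 gt_eqF.
  have := field_id (Num.sqrt (smax / smin)) _ (lt0r_neq0 ss0).
  by rewrite (sqr_sqrtr k0) (sqr_sqrtr (ltW s0)) divfK ?gt_eqF.
rewrite -(ler_pM2l (_ : 0 < smin ^+ 2)) ?exprn_gt0 // eK.
have e4 : 4 * (smin / 2) ^+ 2 = smin ^+ 2 by field.
have A0 : 0 <= (p / lam) ^+ 2 * (4 * smax * g ^+ 2).
  by rewrite mulr_ge0 ?sqr_ge0 // !mulr_ge0 ?sqr_ge0 // ltW // (lt_le_trans s0).
move: hF; rewrite e4 (_ : 2 * (2 * smax) = 4 * smax); last by ring.
lra.
Qed.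

Lemma grad_bound_rescaled (smin smax p lam c x g : R) :
  0 < smin -> smin <= smax -> 0 < p -> 0 < lam -> 0 <= x ->
  g <= c * Num.sqrt x / (smax / smin) * (lam / p) * Num.sqrt smin ->
  8 * Num.sqrt (smax / smin) * p / (lam * Num.sqrt smin) * g <=
  8 * c * Num.sqrt (x / (smax / smin)).
Proof.
move=> s0 ss p0 l0 x0 hg.
have k0 : 0 < smax / smin by rewrite divr_gt0 // (lt_le_trans s0).
have sk0 : 0 < Num.sqrt (smax / smin) by rewrite sqrtr_gt0.
have ss0 : 0 < Num.sqrt smin by rewrite sqrtr_gt0.
have K0 : 0 <= 8 * Num.sqrt (smax / smin) * p / (lam * Num.sqrt smin).
  by rewrite divr_ge0 ?mulr_ge0 ?ltW.
apply: le_trans (ler_wpM2l K0 hg) _.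
rewrite (sqrtrM _ x0) (sqrtrV (ltW k0)).
set sk := Num.sqrt (smax / smin); rewrite -(sqr_sqrtr (ltW k0)) -/sk.
by rewrite le_eqVlt; apply/orP; left; apply/eqP; field; rewrite !gt_eqF.
Qed.

End ScalarBounds.

Theorem claim3 :
  exists c0 : rat, 0 < c0 /\
  forall (R : rcfType) (c : R), 0 < c <= ratr c0 ->
  forall (n r : nat) (Mstar E : 'M[R]_n) (smin smax p lam cinj : R)
         (Om : {set 'I_n * 'I_n}) (X Y : 'M[R]_(n, r))
         (U V : 'M[R]_(n, r)) (S : 'M[R]_r),
  (* standing setting *)
  0 < smin -> smin <= smax ->
  \rank Mstar = r ->
  (exists A D B, is_svd Mstar A D B /\
     forall i, D i i != 0 -> smin <= D i i <= smax) ->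
  0 < p <= 1 -> 0 < lam ->
  (* hypotheses of Lemma 2 *)
  sv_in X (Num.sqrt (smin / 2)) (Num.sqrt (2 * smax)) ->
  sv_in Y (Num.sqrt (smin / 2)) (Num.sqrt (2 * smax)) ->
  spec_lt (POm Om E) (lam / 8) ->
  spec_lt (POm Om (X *m Y^T - Mstar) - p *: (X *m Y^T - Mstar)) (lam / 8) ->
  (* compact SVD of X Y^T *)
  is_compact_svd (X *m Y^T) U S V ->
  0 < cinj ->
  (forall Ah Bh : 'M[R]_(n, r),
     p^-1 * frob (POm Om (U *m Ah^T + Bh *m V^T)) ^+ 2 >=
       cinj * frob (U *m Ah^T + Bh *m V^T) ^+ 2) ->
  grad_norm Om p lam (Mstar + E) X Y <=
    c * Num.sqrt (cinj * p) / (smax / smin) * (lam / p) * Num.sqrt smin ->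
  (* conclusion *)
  exists Q : 'M[R]_r,
    Q \in unitmx /\
    X = U *m diag_sqrt S *m Q /\
    Y = V *m diag_sqrt S *m (invmx Q)^T /\
    forall (A : 'M[R]_r) (SQ : 'M[R]_r) (B : 'M[R]_r), is_svd Q A SQ B ->
      frob (SQ - invmx SQ) <=
        8 * Num.sqrt (smax / smin) * p / (lam * Num.sqrt smin)
          * grad_norm Om p lam (Mstar + E) X Y
      /\ 8 * Num.sqrt (smax / smin) * p / (lam * Num.sqrt smin)
          * grad_norm Om p lam (Mstar + E) X Y
         <= 8 * c * Num.sqrt (cinj * p / (smax / smin)).
Proof.
(* The argument works for every c > 0, so any c0 > 0 will do. *)
exists 1%Q; split => // R c _ n r Mstar E smin smax p lam cinj Om X Y U V S s0 ss _ _
  /andP[p0 _] l0 [AX [DX [BX [svdX bX]]]] [AY [DY [BY [svdY bY]]]] _ _ hsvd cinj0 _ hgrad.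
have [hU [hV [Soff [Spos _]]]] := hsvd.
have a0 : 0 < Num.sqrt (smin / 2) by rewrite sqrtr_gt0 divr_gt0.
have lowX i : Num.sqrt (smin / 2) <= DX i i by case/andP: (bX i).
have lowY i : Num.sqrt (smin / 2) <= DY i i by case/andP: (bY i).
have upX i : DX i i <= Num.sqrt (2 * smax) by case/andP: (bX i).
have upY i : DY i i <= Num.sqrt (2 * smax) by case/andP: (bY i).
have [Q Qu [hXQ hYQ]] := balanced_factorization hsvd
  (svd_gram_unit svdX (fun i => lt_le_trans a0 (lowX i)))
  (svd_gram_unit svdY (fun i => lt_le_trans a0 (lowY i))).
exists Q; do 3!split => //; move=> A SQ B svdQ; split; last first.
  by apply: grad_bound_rescaled => //; rewrite mulr_ge0 ?ltW.
rewrite frobE; apply: imbalance_to_norm => //; first exact: sqrtr_ge0.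
have hYtY : Y^T *m Y = invmx Q *m S *m (invmx Q)^T.
  by rewrite (factor_gram hV Soff Spos hYQ) trmxK.
have := imbalance_lower svdX svdY (ltW a0) lowX lowY
  (factor_gram hU Soff Spos hXQ) hYtY Qu svdQ.
rewrite sqr_sqrtr; last by rewrite divr_ge0 // ltW.
move=> /le_trans; apply.
have := imbalance_upper Om (Mstar + E) (lt0r_neq0 p0) (lt0r_neq0 l0) svdX upX svdY upY.
rewrite sqr_sqrtr ?grad_norm_sq //.
by rewrite mulr_ge0 // ltW // (lt_le_trans s0).
Qed.
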